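(* Let $a>1$ be an integer. Then $$\lim_{n\to\infty}\frac{\#\{k\le n : \mathrm{LB}_3(a^k)=(1,0,0)\}}{n}=\log_\phi(1+\phi^{-2}),\qquad \lim_{n\to\infty}\frac{\#\{k\le n : \mathrm{LB}_3(a^k)=(1,0,1)\}}{n}=\log_\phi\frac{\phi}{1+\phi^{-2}};$$ in particular both limits exist.
   Context: Let $F$ be the shifted Fibonacci sequence: $F_1=1$, $F_2=2$, $F_{n+2}=F_{n+1}+F_n$. By Zeckendorf's theorem every positive integer $m$ has a unique expansion $m=\sum_{k=1}^M \epsilon(k)F_{M-k+1}$ with $\epsilon(k)\in\{0,1\}$, $\epsilon(1)=1$ and $\epsilon(k)\epsilon(k+1)=0$ for all $k\le M-1$. For $s\in\mathbb{N}$ with $M\ge s$, $\mathrm{LB}_s(m):=(\epsilon(1),\dots,\epsilon(s))$ (the leading block of length $s$); it is undefined if $M<s$. $\phi=(1+\sqrt5)/2$ is the golden ratio. *)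

From HB Require Import structures.
From mathcomp Require Import all_boot all_order all_algebra.
From mathcomp Require Import all_classical all_reals all_analysis.
Set Implicit Arguments. Unset Strict Implicit. Unset Printing Implicit Defensive.
Import Order.TTheory GRing.Theory Num.Theory.

(* Shifted Fibonacci: F 1 = 1, F 2 = 2, F (n+2) = F (n+1) + F n.
   (F 0 = 1 is an auxiliary value, never used for indices >= 1 except
   through the recurrence F 2 = F 1 + F 0.) *)
Fixpoint F (n : nat) : nat :=
  match n with
  | 0 => 1
  | 1 => 1
  | (m.+1 as p).+1 => F p + F m
  end.

(* eps : seq bool is a Zeckendorf expansion of m:
   with M = size eps and eps(k) = nth false eps (k-1) (1-indexed in the paper),
   m = sum_{k=1}^M eps(k) F_{M-k+1}, eps(1) = 1, eps(k) eps(k+1) = 0. *)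
Definition is_zeck (m : nat) (eps : seq bool) : Prop :=
  [/\ 0 < size eps,
      nth false eps 0 = true,
      (forall k, k.+1 < size eps -> ~~ (nth false eps k && nth false eps k.+1)) &
      m = \sum_(k < size eps) nth false eps k * F (size eps - k)].

Definition LB_is (s m : nat) (b : seq bool) : Prop :=
  exists eps, [/\ is_zeck m eps, s <= size eps & take s eps = b].

Definition cntLB (a n : nat) (b : seq bool) : nat :=
  \sum_(1 <= k < n.+1) nat_of_bool (asbool (LB_is 3 (a ^ k) b)).

Definition phi {R : realType} : R := (1 + Num.sqrt 5) / 2.

(* Write alpha = log_phi a and beta = log_phi (1 + phi^-2).  By Binet's formula
   F_M ~ phi^(M+1) / sqrt 5 and F_M + F_(M-2) = L_M ~ phi^M (a Lucas number), so
   an integer m in [F_M, F_(M+1)) has leading block 101 when m >= L_M and 100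
   otherwise.  On the logarithmic scale m = phi^(M+t) this says: the block is 101
   for t in [0, 1 - beta) and 100 for t in [1 - beta, 1), up to margins that
   vanish as M grows.  Since a^k = phi^(k alpha), it remains to count the k for
   which k alpha mod 1 falls into each of these two intervals.
   alpha is irrational: phi^p = n would make psi^p = L_p - n a nonzero integer of
   modulus < 1.  Dirichlet's theorem gives q with q alpha within eta of an
   integer, so along each residue class mod q the points k alpha sweep the circle
   in steps of size eta, and an interval of length w is hit with lower density at
   least w - eta.  The lower densities beta and 1 - beta of the two disjoint
   events add up to 1, which forces both densities to converge. *)

From HB Require Import structures.
From mathcomp Require Import all_boot all_order all_algebra.
From mathcomp Require Import all_classical all_reals all_analysis.
From mathcomp Require Import ring lra zify.
Import Order.TTheory GRing.Theory Num.Theory numFieldNormedType.Exports.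

Fixpoint zeck_val (s : seq bool) : nat :=
  if s is b :: s' then b * F (size s').+1 + zeck_val s' else 0.

Definition no_adjacent_ones : pred (seq bool) := sorted (fun b c => ~~ (b && c)).

Lemma zeck_val_cons b s : zeck_val (b :: s) = b * F (size s).+1 + zeck_val s.
Proof. by []. Qed.

Lemma zeck_valE s :
  \sum_(k < size s) nth false s k * F (size s - k) = zeck_val s.
Proof.
elim: s => [|b s IH] /=; first by rewrite big_ord0.
by rewrite big_ord_recl /= ?subn0 -IH.
Qed.

Lemma no_adjacent_onesP s : reflect
  (forall k, k.+1 < size s -> ~~ (nth false s k && nth false s k.+1))
  (no_adjacent_ones s).
Proof. exact: sortedP. Qed.

Lemma no_adjacent_ones_cons b s :
  no_adjacent_ones (b :: s) = ~~ (b && head false s) && no_adjacent_ones s.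
Proof. by case: s => [|c s] /=; rewrite ?andbF. Qed.

Lemma F_SS n : F n.+2 = F n.+1 + F n.
Proof. by []. Qed.

Lemma leq_FS n : F n <= F n.+1.
Proof. by case: n => [|n] //=; rewrite leq_addr. Qed.

Lemma leq_F : {homo F : m n / m <= n}.
Proof.
move=> m n /subnK <-; elim: (n - m) => [|k IH] //=.
exact: leq_trans IH (leq_FS _).
Qed.

Lemma zeck_val_bounds s : no_adjacent_ones s ->
  zeck_val s < F (size s).+1 /\ (~~ head false s -> zeck_val s < F (size s)).
Proof.
elim: s => [|[] s IH] //; rewrite no_adjacent_ones_cons => /andP[hd /IH[lt1 lt0]].
- split=> //; rewrite /= mul1n ltn_add2l; exact: lt0.
- by split=> [|_]; rewrite /= mul0n ?(leq_trans lt1 (leq_FS _)).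
Qed.

Lemma zeck_val_ltF {s} : no_adjacent_ones s -> zeck_val s < F (size s).+1.
Proof. by case/zeck_val_bounds. Qed.

Lemma zeck_val_head {s} :
  no_adjacent_ones s -> F (size s) <= zeck_val s -> head false s.
Proof.
by move=> /zeck_val_bounds[_ lt0]; apply: contraTT; rewrite -ltnNge; apply: lt0.
Qed.

Lemma zeck_exists {L m} : m < F L.+1 ->
  exists s, [/\ size s = L, no_adjacent_ones s & zeck_val s = m].
Proof.
elim/ltn_ind: L m => [[|L]] IH m ltm.
  by exists [::]; case: m ltm.
have [small|big] := ltnP m (F L.+1).
  have [s [<- ok <-]] := IH L (ltnSn _) m small.
  by exists (false :: s); rewrite no_adjacent_ones_cons ok.
case: L IH ltm big => [|L] IH ltm big.
  by exists [:: true]; case: m ltm big => [|[|]].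
have ltm' : m - F L.+2 < F L.+1 by rewrite ltn_subLR // addnC.
have [s [sz ok val]] := IH L (leqW (ltnSn _)) _ ltm'.
exists [:: true, false & s]; rewrite !no_adjacent_ones_cons /= sz ok val.
by rewrite mul1n add0n subnKC.
Qed.

Lemma zeck_inj s t : no_adjacent_ones s -> no_adjacent_ones t ->
  size s = size t -> zeck_val s = zeck_val t -> s = t.
Proof.
elim: s t => [|b s IH] [|c t] // oks okt [sz] /=.
move: oks okt; rewrite !no_adjacent_ones_cons => /andP[_ oks] /andP[_ okt].
have [-> | neq] := eqVneq b c.
  by rewrite sz => /addnI /(IH t oks okt sz) ->.
have top_digit u v : no_adjacent_ones v -> size u = size v ->
    F (size u).+1 + zeck_val u <> zeck_val v.
  move=> okv eqsz eqv; have := zeck_val_ltF okv.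
  by rewrite -eqv -eqsz ltnNge leq_addr.
case: b c neq => [] [] // _; rewrite !mul1n !mul0n !add0n => eqv.
- by case: (top_digit s t okt sz eqv).
- by case: (top_digit t s oks (esym sz) (esym eqv)).
Qed.

Lemma is_zeckP m s :
  is_zeck m s <-> [/\ no_adjacent_ones s, head false s & zeck_val s = m].
Proof.
rewrite /is_zeck zeck_valE; split.
  by move=> [pos hd /no_adjacent_onesP ok ->]; split=> //; case: s pos hd {ok}.
by move=> [/no_adjacent_onesP ok hd <-]; split=> //; case: s hd {ok}.
Qed.

Lemma is_zeck_bounds {m s} : is_zeck m s -> F (size s) <= m < F (size s).+1.
Proof.
case/is_zeckP=> ok hd <-; rewrite zeck_val_ltF // andbT.
by case: s hd ok => [|[] s] //= _ _; rewrite mul1n leq_addr.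
Qed.

Lemma F_bracket_uniq {M N m} :
  F M <= m < F M.+1 -> F N <= m < F N.+1 -> M = N.
Proof.
move=> /andP[lM uM] /andP[lN uN]; apply/eqP; rewrite eqn_leq.
apply/andP; split; rewrite leqNgt; apply/negP => /leq_F h.
- by have := leq_ltn_trans (leq_trans h lM) uN; rewrite ltnn.
- by have := leq_ltn_trans (leq_trans h lN) uM; rewrite ltnn.
Qed.

Lemma is_zeck_uniq {m s t} : is_zeck m s -> is_zeck m t -> s = t.
Proof.
move=> zs zt; have sz := F_bracket_uniq (is_zeck_bounds zs) (is_zeck_bounds zt).
case/is_zeckP: zs => oks _ vs; case/is_zeckP: zt => okt _ vt.
by apply: zeck_inj; rewrite // vs vt.
Qed.

Lemma LB_is_fun {n m b1 b2} : LB_is n m b1 -> LB_is n m b2 -> b1 = b2.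
Proof. by move=> [s1 [z1 _ <-]] [s2 [z2 _ <-]]; rewrite (is_zeck_uniq z1 z2). Qed.

Lemma LB3_range M m : 3 <= M -> F M <= m < F M.+1 ->
  LB_is 3 m [:: true; false; F M + F (M - 2) <= m].
Proof.
move=> leM /andP[lo hi]; have [s [sz ok val]] := zeck_exists hi.
have hd : head false s by apply: zeck_val_head; rewrite // sz val.
case: M leM sz {lo hi} => [|[|[|K]]] // _; rewrite subSS subSS subn0.
case: s ok val hd => [|b1 [|x2 [|x3 r]]] // ok val b1T [szr].
rewrite {}[b1]b1T in ok val.
move: (ok); rewrite no_adjacent_ones_cons => /andP[x2F].
rewrite no_adjacent_ones_cons => /andP[_ okr].
have {}x2F : x2 = false by case: x2 x2F ok val.
rewrite {}x2F in ok val.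
exists [:: true, false, x3 & r]; split=> //; first exact/is_zeckP.
have size2 : size [:: false, x3 & r] = K.+2 by rewrite /= szr.
rewrite [take _ _]/= take0 -val !zeck_val_cons size2 szr mul1n mul0n add0n.
rewrite leq_add2l; congr [:: _; _; _].
case: x3 {ok val size2} okr => [_|]; first by rewrite mul1n leq_addr.
rewrite no_adjacent_ones_cons mul0n add0n leqNgt => /andP[_ /zeck_val_ltF].
by rewrite szr => ->.
Qed.

Lemma cntLB_disjoint a n :
  (cntLB a n [:: true; false; false] + cntLB a n [:: true; false; true] <= n)%N.
Proof.
rewrite /cntLB -big_split /=; apply: (@leq_trans (\sum_(1 <= k < n.+1) 1)).
  apply: leq_sum => k _; case: asboolP => [LB100|]; case: asboolP => // LB101.
  by have := LB_is_fun LB100 LB101.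
by rewrite sum_nat_const_nat subn1 muln1.
Qed.

Fixpoint lucas (n : nat) : nat :=
  match n with 0 => 2 | 1 => 1 | (m.+1 as p).+1 => lucas p + lucas m end.

Lemma lucas_F n : 2 <= n -> lucas n = F n + F (n - 2).
Proof.
case: n => [|[|n]] // _; rewrite !subSS subn0.
elim/ltn_ind: n => [[|[|n]]] IH //.
rewrite -[lucas _]/(lucas n.+3 + lucas n.+2)%N (IH n.+1) // (IH n) // !F_SS; lia.
Qed.

Lemma sum_blocks_ge (P : pred nat) (s : nat -> nat) m N Z :
  (forall t, s t + m <= s t.+1) -> (forall t, t < Z -> s t + m <= N) ->
  (forall t j, t < Z -> j < m -> P (s t + j)) ->
  Z * m <= \sum_(0 <= i < N) P i.
Proof.
move=> s_incr s_bnd s_hits.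
have block t : t < Z -> \sum_(s t <= i < s t + m) P i = m.
  move=> ltZ; transitivity (\sum_(s t <= i < s t + m) 1).
    apply: eq_big_nat => i /andP[lo hi].
    by rewrite -(subnKC lo) s_hits //; lia.
  by rewrite sum_nat_const_nat addKn muln1.
suff prefix t : t < Z -> t.+1 * m <= \sum_(0 <= i < s t + m) P i.
  case: Z s_bnd {s_hits block} prefix => [|Z] s_bnd prefix; first by rewrite mul0n.
  apply: leq_trans (prefix Z (ltnSn _)) _.
  by rewrite [X in _ <= X](@big_cat_nat _ _ _ (s Z + m)) ?s_bnd //= leq_addr.
elim: t => [|t IH] ltZ.
  by rewrite (@big_cat_nat _ _ _ (s 0)) ?leq_addr //= block // mul1n leq_addl.
rewrite (@big_cat_nat _ _ _ (s t.+1)) ?leq_addr //= block // mulSn addnC leq_add2r.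
apply: leq_trans (IH (ltnW ltZ)) _.
by rewrite [X in _ <= X](@big_cat_nat _ _ _ (s t + m)) ?s_incr //= leq_addr.
Qed.

Lemma sum_ltn_min n K : \sum_(0 <= k < n) (k < K) = minn n K.
Proof.
elim: n => [|n IH]; first by rewrite big_geq // min0n.
by rewrite big_nat_recr //= IH; case: (ltnP n K) => lt_nK /=; lia.
Qed.

Lemma pigeonhole_nat {f : nat -> nat} {N} : (forall i, i <= N -> f i < N) ->
  exists i j, i < j <= N /\ f i = f j.
Proof.
move=> f_lt; have [/uniq_leq_size le_size | /(uniqPn 0) [i [j [ltij ltj]]]] :=
  boolP (uniq (map f (iota 0 N.+1))).
  have sub : {subset map f (iota 0 N.+1) <= iota 0 N}.
    by move=> y /mapP[i]; rewrite mem_iota => /andP[_ ltiN] ->; rewrite mem_iota f_lt.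
  by have := le_size _ sub; rewrite size_map !size_iota ltnn.
rewrite size_map size_iota in ltj.
rewrite !(nth_map 0) ?size_iota ?(ltn_trans ltij) // !nth_iota ?(ltn_trans ltij) //.
by rewrite !add0n => eqf; exists i, j; rewrite ltij.
Qed.

Lemma sum_by_residues (f : nat -> nat) q N :
  \sum_(0 <= k < N * q) f k = \sum_(0 <= r < q) \sum_(0 <= i < N) f (i * q + r).
Proof.
elim: N => [|N IH]; first by rewrite mul0n big_geq // big1 // => r _; rewrite big_geq.
rewrite mulSn addnC (@big_cat_nat _ _ _ (N * q)) ?leq_addr //= IH.
rewrite -{1}[(N * q)%N]add0n big_addn addKn -big_split /=; apply: eq_bigr => r _.
by rewrite big_nat_recr //= [(r + _)%N]addnC.
Qed.

Local Open Scope ring_scope.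

Section GoldenRatio.
Context {R : realType}.

Definition psi : R := (1 - Num.sqrt 5) / 2.

Lemma sqrt5_sq : Num.sqrt (5 : R) ^+ 2 = 5.
Proof. by rewrite sqr_sqrtr. Qed.

Lemma sqrt5_bounds : 2 < Num.sqrt (5 : R) < 3.
Proof.
have := sqrt5_sq; have := @sqrtr_ge0 R 5; rewrite expr2 => ? ?.
by apply/andP; split; nra.
Qed.

Lemma sqrt5_gt0 : 0 < Num.sqrt (5 : R).
Proof. by rewrite sqrtr_gt0. Qed.

Lemma phi_sq : phi ^+ 2 = phi + 1 :> R.
Proof. have := sqrt5_sq; rewrite /phi !expr2 => ?; nra. Qed.

Lemma psi_sq : psi ^+ 2 = psi + 1.
Proof. have := sqrt5_sq; rewrite /psi !expr2 => ?; nra. Qed.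

Lemma phi_gt1 : (1 : R) < phi.
Proof. have /andP[? ?] := sqrt5_bounds; rewrite /phi; lra. Qed.

Lemma phi_gt0 : (0 : R) < phi.
Proof. exact: lt_trans phi_gt1. Qed.

Lemma psi_bounds : -1 < psi < 0.
Proof. have /andP[? ?] := sqrt5_bounds; rewrite /psi; apply/andP; split; lra. Qed.

Lemma psiX_bounds n : -1 <= psi ^+ n <= 1.
Proof.
have /andP[? ?] := psi_bounds; rewrite -ler_norml normrX exprn_ile1 //.
by rewrite ler_norml; apply/andP; split; lra.
Qed.

Lemma Fibonacci_Binet n : Num.sqrt 5 * (F n)%:R = phi ^+ n.+1 - psi ^+ n.+1.
Proof.
have diff : phi - psi = Num.sqrt 5 by rewrite /phi /psi; field.
elim/ltn_ind: n => [[|[|n]]] IH.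
- by rewrite mulr1 !expr1.
- by rewrite [F 1]/= mulr1 phi_sq psi_sq -diff; ring.
- rewrite [F _]/= natrD mulrDr (IH n.+1) // (IH n) //.
  by rewrite -[n.+3]addn2 !exprD phi_sq psi_sq !exprS; ring.
Qed.

Lemma lucas_Binet n : (lucas n)%:R = phi ^+ n + psi ^+ n :> R.
Proof.
have sum : phi + psi = 1 :> R by rewrite /phi /psi; field.
elim/ltn_ind: n => [[|[|n]]] IH.
- by rewrite !expr0.
- by rewrite !expr1 sum.
- rewrite [lucas _]/= natrD (IH n.+1) // (IH n) //.
  by rewrite -[n.+2]addn2 !exprD phi_sq psi_sq !exprS; ring.
Qed.

Lemma phi_inv : phi^-1 = phi - 1 :> R.
Proof.
have phi_mul : phi * (phi - 1) = 1 :> R by rewrite mulrBr mulr1 -expr2 phi_sq; ring.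
have phi_neq0 := lt0r_neq0 phi_gt0.
by apply: (mulfI phi_neq0); rewrite mulfV.
Qed.

Lemma lt_F_of_phiX (y : R) n :
  Num.sqrt 5 * y < phi ^+ n.+1 - 1 -> y < (F n)%:R.
Proof.
move=> lt_y; rewrite -(ltr_pM2l sqrt5_gt0) Fibonacci_Binet.
by have /andP[_ ?] := psiX_bounds n.+1; lra.
Qed.

Lemma le_F_of_phiX (y : R) n :
  phi ^+ n.+1 + 1 <= Num.sqrt 5 * y -> (F n)%:R <= y.
Proof.
move=> le_y; rewrite -(ler_pM2l sqrt5_gt0) Fibonacci_Binet.
by have /andP[? _] := psiX_bounds n.+1; lra.
Qed.

Lemma lt_lucas_of_phiX (y : R) n : y < phi ^+ n - 1 -> y < (lucas n)%:R.
Proof. by rewrite lucas_Binet; have /andP[? _] := psiX_bounds n; lra. Qed.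

Lemma le_lucas_of_phiX (y : R) n : phi ^+ n + 1 <= y -> (lucas n)%:R <= y.
Proof. by rewrite lucas_Binet; have /andP[_ ?] := psiX_bounds n; lra. Qed.

Lemma one_add_phi_invsq : 1 + phi ^-2 = Num.sqrt 5 / phi :> R.
Proof.
have sqrt5E : Num.sqrt 5 = 2 * phi - 1 :> R by rewrite /phi; field.
by rewrite -exprVn sqrt5E phi_inv; have := phi_sq; rewrite !expr2 => ?; nra.
Qed.

Lemma phiX_neq_nat {p} n : (0 < p)%N -> phi ^+ p != n%:R :> R.
Proof.
move=> p_gt0; apply/eqP => phipE.
have psipE : psi ^+ p = (lucas p)%:R - n%:R.
  by rewrite lucas_Binet phipE [_ + psi ^+ p]addrC addrK.
have psip_int : psi ^+ p \is a Num.int by rewrite psipE rpredB ?natr_int.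
have /andP[? psi_lt0] := psi_bounds.
have psi_small : `|psi| < 1 by rewrite ltr_norml; apply/andP; split; lra.
have := norm_intr_ge1 psip_int (expf_neq0 _ (ltr0_neq0 psi_lt0)).
by rewrite normrX leNgt exprn_ilt1 ?normr_ge0 // -lt0n p_gt0.
Qed.

End GoldenRatio.

Section Approximation.
Context {R : realType}.

Lemma irrational_natM_neq_int (x : R) (q : nat) (p : int) :
  irrational x -> (0 < q)%N -> q%:R * x != p%:~R.
Proof.
move=> x_irr q_gt0; apply/negP => /eqP qxE; apply: x_irr; apply/rationalP.
by exists p, q; rewrite -qxE [_ * x]mulrC mulfK // pnatr_eq0 -lt0n.
Qed.

Lemma dirichlet_approx {x e : R} : irrational x -> 0 < e ->
  exists2 q : nat, (0 < q)%N & exists p : int, 0 < `|q%:R * x - p%:~R| < e.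
Proof.
move=> x_irr e_gt0; set N := (Num.truncn e^-1).+1.
have N_gt : e^-1 < N%:R by exact: truncnS_gt.
pose b i := Num.floor (N%:R * (i%:R * x)).
pose f i := `|(b i %% N%:Z)%Z|%N.
have f_lt i : (i <= N)%N -> (f i < N)%N.
  by move=> _; rewrite /f -ltz_nat abszE ger0_norm ?modz_ge0 ?ltz_pmod.
have [i [j [/andP[ltij leqjN] eqf]]] := pigeonhole_nat f_lt.
have /dvdzP[t bjiE] : (N%:Z %| b j - b i)%Z.
  rewrite -eqz_mod_dvd; apply/eqP; move/(congr1 Posz): eqf.
  by rewrite !abszE !ger0_norm ?modz_ge0.
exists (j - i)%N; first by rewrite subn_gt0.
exists t; set D := (j - i)%:R * x - t%:~R.
have [bi_lo bi_hi] := andP (floor_itv (N%:R * (i%:R * x))).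
have [bj_lo bj_hi] := andP (floor_itv (N%:R * (j%:R * x))).
rewrite -/(b i) -/(b j) intrD in bi_lo bi_hi bj_lo bj_hi.
have ND : N%:R * D = (N%:R * (j%:R * x) - (b j)%:~R) - (N%:R * (i%:R * x) - (b i)%:~R).
  have : ((b j - b i)%:~R : R) = t%:~R * N%:R by rewrite bjiE intrM.
  rewrite intrB /D natrB 1?ltnW // => bjE.
  have -> : (b j)%:~R = (b i)%:~R + t%:~R * N%:R :> R by rewrite -bjE; ring.
  ring.
have ND_lt1 : N%:R * `|D| < 1.
  by rewrite -[N%:R]ger0_norm ?ler0n // -normrM ND ltr_norml; apply/andP; split; lra.
have D_neq0 : D != 0.
  by rewrite subr_eq0 irrational_natM_neq_int // subn_gt0.
have : e * e^-1 = 1 by rewrite mulfV // gt_eqF.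
have : 0 < (N%:R : R) by rewrite ltr0n.
by rewrite normr_gt0 D_neq0 /=; nra.
Qed.

End Approximation.

Section IntervalMod1.
Context {R : realType}.

Definition mod1_in (u v x : R) : Prop := exists z : int, z%:~R + u <= x <= z%:~R + v.

Lemma mod1_inDz {u v x} (z : int) : mod1_in u v x -> mod1_in u v (x + z%:~R).
Proof.
by move=> [z0 /andP[lo hi]]; exists (z0 + z); rewrite intrD; apply/andP; split; lra.
Qed.

Lemma mod1_inN u v x : mod1_in (- v) (- u) (- x) -> mod1_in u v x.
Proof.
by move=> [z0 /andP[lo hi]]; exists (- z0); rewrite intrN; apply/andP; split; lra.
Qed.

Lemma mod1_in_nat {u v x} (M0 : nat) : mod1_in u v x -> v <= 1 -> M0%:R + 1 <= x ->
  exists2 M : nat, (M0 <= M)%N & M%:R + u <= x <= M%:R + v.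
Proof.
move=> [z /andP[lo hi]] v_le1 x_ge; have z_ge : M0%:R <= (z%:~R : R) by lra.
have z_ge0 : (0 <= z)%R by rewrite -(ler0z R) (le_trans _ z_ge).
exists `|z|%N; first by rewrite -(ler_nat R) natr_absz ger0_norm.
by rewrite natr_absz ger0_norm // lo hi.
Qed.

Lemma ceil_div_itv (c d : R) : 0 <= c -> 0 < d ->
  (`|Num.ceil (c / d)|%N)%:R * d - d < c <= (`|Num.ceil (c / d)|%N)%:R * d.
Proof.
move=> c_ge0 d_gt0; have /andP[lo hi] := ceil_itv (c / d).
have n_ge0 : 0 <= Num.ceil (c / d).
  by rewrite ceil_ge0 (lt_le_trans (ltrN10 R)) // divr_ge0 // ltW.
have cdE : c / d * d = c by rewrite divfK ?gt_eqF.
by rewrite natr_absz ger0_norm // intrB in lo *; apply/andP; split; nra.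
Qed.

Lemma progression_hits (u v y d : R) (m N Z : nat) (P : pred nat) :
  0 < d -> m%:R * d <= v - u -> v - u <= 1 ->
  ((0 < Z)%N -> Z%:R <= (N%:R - 1 - m%:R) * d) ->
  (forall i, mod1_in u v (y + i%:R * d) -> P i) ->
  (Z * m <= \sum_(0 <= i < N) P i)%N.
Proof.
move=> d_gt0 md_le w_le1 Z_le hits.
set z0 := Num.ceil (y - u); have /andP[z0_lo z0_hi] := ceil_itv (y - u).
rewrite -/z0 intrB in z0_lo z0_hi.
pose c (t : nat) := (z0 + t%:Z)%:~R + u - y.
have c_ge0 t : 0 <= c t by rewrite /c intrD -pmulrn; have := ler0n R t; lra.
pose s t := `|Num.ceil (c t / d)|%N.
have s_itv t : (s t)%:R * d - d < c t <= (s t)%:R * d by apply: ceil_div_itv.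
have cE t : c t = z0%:~R + t%:R + u - y by rewrite /c intrD -pmulrn.
apply: (@sum_blocks_ge _ s).
- move=> t; have := s_itv t; have := s_itv t.+1; rewrite !cE -natr1.
  move=> /andP[_ hi1] /andP[lo0 _].
  by rewrite -ltnS -(ltr_nat R) -addn1 !natrD; nra.
- move=> t ltZ; have /andP[lo _] := s_itv t; have := Z_le (leq_ltn_trans (leq0n t) ltZ).
  have t1_le : (t%:R : R) + 1 <= Z%:R by rewrite natr1 ler_nat.
  by rewrite cE in lo; rewrite -(ler_nat R) natrD; nra.
- move=> t j _ ltjm; apply: hits; exists (z0 + t%:Z).
  have jd_ge0 : 0 <= (j%:R : R) * d by rewrite mulr_ge0 ?ler0n ?ltW.
  have jd_le : (j%:R : R) * d + d <= m%:R * d.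
    by rewrite -[X in _ + X]mul1r -mulrDl ler_pM2r // natr1 ler_nat.
  have /andP[lo hi] := s_itv t; rewrite /c intrD -pmulrn in lo hi.
  by rewrite intrD -pmulrn natrD mulrDl; apply/andP; split; lra.
Qed.

Lemma progression_hits_signed (u v y eta : R) (m N Z : nat) (P : pred nat) :
  eta != 0 -> m%:R * `|eta| <= v - u -> v - u <= 1 ->
  ((0 < Z)%N -> Z%:R <= (N%:R - 1 - m%:R) * `|eta|) ->
  (forall i, mod1_in u v (y + i%:R * eta) -> P i) ->
  (Z * m <= \sum_(0 <= i < N) P i)%N.
Proof.
move=> eta_neq0 md_le w_le1 Z_le hits; have d_gt0 : 0 < `|eta| by rewrite normr_gt0.
have [eta_gt0 | eta_lt0] := ltP 0 eta.
  apply: (@progression_hits u v y `|eta|) => // i.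
  by rewrite gtr0_norm //; apply: hits.
apply: (@progression_hits (- v) (- u) (- y) `|eta|) => //; try by rewrite opprK addrC.
by move=> i; rewrite ler0_norm // mulrN -opprD => /mod1_inN; apply: hits.
Qed.

End IntervalMod1.

Section LowerDensity.
Context {R : realType}.

(* Along the residue class k = i q + r, k al moves by eta = q al - p modulo 1. *)
Lemma visits_count_ge {al u v : R} {P : pred nat} {q m : nat} {p : int} (n : nat) :
  let eta := q%:R * al - p%:~R in
  eta != 0 -> m%:R * `|eta| <= v - u -> v - u <= 1 ->
  (forall k, mod1_in u v (k%:R * al) -> P k) ->
  (q * (Num.truncn (((n %/ q)%:R - 1 - m%:R) * `|eta|) * m)
     <= \sum_(0 <= k < n) P k)%N.
Proof.
move=> eta eta_neq0 md_le w_le1 hits.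
set N := (n %/ q)%N; set Z := Num.truncn _.
apply: (@leq_trans (\sum_(0 <= k < N * q) P k)); last first.
  by rewrite [X in (_ <= X)%N](@big_cat_nat _ _ _ (N * q)) ?leq_divM //= leq_addr.
rewrite sum_by_residues -[q in (q * _)%N]subn0 -sum_nat_const_nat.
apply: leq_sum => r _; apply: (@progression_hits_signed _ u v (r%:R * al) eta) => //.
  by rewrite /Z truncn_gt0 => ge1; rewrite truncn_le (le_trans ler01 ge1).
move=> i hit; apply: hits.
have -> : (i * q + r)%:R * al = r%:R * al + i%:R * eta + (i%:Z * p)%:~R.
  by rewrite intrM -pmulrn /eta natrD natrM; ring.
exact: mod1_inDz.
Qed.

Lemma visits_linear_lower_bound (al u v e : R) (P : pred nat) :
  irrational al -> 0 <= v - u <= 1 -> 0 < e ->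
  (forall k, mod1_in u v (k%:R * al) -> P k) ->
  exists C : R, forall n, (v - u - e) * n%:R - C <= (\sum_(0 <= k < n) P k)%:R.
Proof.
move=> al_irr /andP[w_ge0 w_le1] e_gt0 hits.
have [q q_gt0 [p]] := dirichlet_approx al_irr e_gt0.
set eta := q%:R * al - p%:~R; set d := `|eta| => /andP[d_gt0 d_lt].
set m := Num.truncn ((v - u) / d).
have m_le : m%:R * d <= v - u.
  by rewrite -ler_pdivlMr // truncn_le divr_ge0 // ltW.
have m_gt : v - u < m%:R * d + d.
  have : (v - u) / d < m%:R + 1 by rewrite natr1; apply: truncnS_gt.
  by rewrite ltr_pdivrMr // mulrDl mul1r.
exists (2 * q%:R * (m%:R + 1)) => n.
have eta_neq0 : eta != 0 by rewrite -normr_gt0.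
have := visits_count_ge n eta_neq0 m_le w_le1 hits.
set N := (n %/ q)%N; set Z := Num.truncn _ => count_ge.
have Z_gt : (N%:R - 1 - m%:R) * d < Z%:R + 1 by rewrite natr1 truncnS_gt.
have n_lt : n%:R < N%:R * q%:R + q%:R :> R.
  by rewrite -natrM -natrD ltr_nat addnC -mulSn ltn_ceil.
have md_ge0 : 0 <= m%:R * d by rewrite mulr_ge0 ?ler0n ?ltW.
have qm_ge0 : 0 <= q%:R * m%:R :> R by rewrite mulr_ge0 ?ler0n.
have hZ : q%:R * m%:R * ((N%:R - 1 - m%:R) * d - 1) <= q%:R * m%:R * Z%:R.
  by apply: ler_wpM2l => //; lra.
have hN : m%:R * d * (n%:R - q%:R) <= m%:R * d * (N%:R * q%:R).
  by apply: ler_wpM2l => //; lra.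
have hn : (v - u - e) * n%:R <= m%:R * d * n%:R.
  by apply: ler_wpM2r; [rewrite ler0n | lra].
have hq : q%:R * m%:R * d * (1 + m%:R) <= q%:R * (1 + m%:R).
  have -> : q%:R * m%:R * d * (1 + m%:R) = m%:R * d * (q%:R * (1 + m%:R)) by ring.
  by rewrite ler_piMl ?mulr_ge0 ?addr_ge0 ?ler0n //; lra.
have cnt : q%:R * (Z%:R * m%:R) <= (\sum_(0 <= k < n) P k)%:R :> R.
  by rewrite -!natrM ler_nat.
nra.
Qed.

Lemma eventually_ratio_ge {c C e : R} {x : nat -> R} :
  (forall n, c * n%:R - C <= x n) -> 0 < e ->
  exists N0 : nat, forall n, (N0 <= n)%N -> c - e <= x n / n%:R.
Proof.
move=> x_ge e_gt0; exists (Num.truncn (C / e)).+1 => n le_n.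
have n_gt0 : 0 < n%:R :> R by rewrite ltr0n (leq_trans _ le_n).
have : C / e < n%:R by rewrite (lt_le_trans (truncnS_gt _)) ?ler_nat.
rewrite ler_pdivlMr // ltr_pdivrMr // => C_lt; have := x_ge n; nra.
Qed.

Lemma visits_lower_density {al u v e : R} {P : pred nat} {K0 : nat} :
  irrational al -> 0 <= v - u <= 1 -> 0 < e ->
  (forall k, (K0 <= k)%N -> mod1_in u v (k%:R * al) -> P k) ->
  exists N0 : nat, forall n, (N0 <= n)%N ->
    v - u - e <= (\sum_(1 <= k < n.+1) P k)%:R / n%:R.
Proof.
move=> al_irr w_itv e_gt0 hits; have e2_gt0 : 0 < e / 2 by rewrite divr_gt0.
pose P' := [pred k | P k || (k < K0)%N].
have hits' k : mod1_in u v (k%:R * al) -> P' k.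
  move=> hit; rewrite inE /=.
  by case: (ltnP k K0) => [_|ge]; rewrite ?orbT // orbF hits.
have [C count_ge] :=
  @visits_linear_lower_bound al u v (e / 2) P' al_irr w_itv e2_gt0 hits'.
have P'_le n : (\sum_(0 <= k < n) P' k <= \sum_(1 <= k < n.+1) P k + K0 + 1)%N.
  have le_split : (\sum_(0 <= k < n) P' k <= \sum_(0 <= k < n) P k + K0)%N.
    apply: (@leq_trans (\sum_(0 <= k < n) (P k + (k < K0)%N))).
      by apply: leq_sum => k _; rewrite inE; case: (P k); case: (k < K0)%N.
    by rewrite big_split /= sum_ltn_min leq_add2l geq_minr.
  have le_shift : (\sum_(0 <= k < n) P k <= \sum_(1 <= k < n.+1) P k + 1)%N.
    apply: (@leq_trans (\sum_(0 <= k < n.+1) P k)).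
      by rewrite big_nat_recr //= leq_addr.
    by rewrite big_ltn // addnC leq_add2l leq_b1.
  lia.
have lin n : (v - u - e / 2) * n%:R - (C + K0%:R + 1)
    <= (\sum_(1 <= k < n.+1) P k)%:R.
  by have := count_ge n; have := P'_le n; rewrite -(ler_nat R) !natrD; lra.
have [N0 ratio_ge] := eventually_ratio_ge lin e2_gt0.
by exists N0 => n /ratio_ge; lra.
Qed.

End LowerDensity.

Section LogPhi.
Context {R : realType}.

Definition logphi (x : R) : R := ln x / ln phi.

Definition beta : R := logphi (1 + phi ^-2).

Lemma ln_phi_gt0 : 0 < ln (phi : R).
Proof. exact: ln_gt0 phi_gt1. Qed.

Lemma phi_powRE (x : R) : phi `^ x = expR (x * ln phi) :> R.
Proof. by rewrite /powR gt_eqF ?phi_gt0. Qed.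

Lemma phi_powR_logphi (x : R) : 0 < x -> phi `^ logphi x = x.
Proof. by move=> x_gt0; rewrite phi_powRE divfK ?gt_eqF ?ln_phi_gt0 ?lnK. Qed.

Lemma phi_powR_gt1 (x : R) : (1 < phi `^ x) = (0 < x).
Proof. by rewrite phi_powRE expR_gt1 pmulr_lgt0 ?ln_phi_gt0. Qed.

Lemma phi_powRD (x y : R) : phi `^ (x + y) = phi `^ x * phi `^ y :> R.
Proof. by rewrite !phi_powRE mulrDl expRD. Qed.

Lemma phi_powRN (x : R) : phi `^ (- x) = (phi `^ x)^-1 :> R.
Proof. exact: powRN. Qed.

Lemma phi_powR1 : phi `^ 1 = phi :> R.
Proof. by rewrite powRr1 ?ltW ?phi_gt0. Qed.

Lemma phi_powR_nat n : phi `^ n%:R = phi ^+ n :> R.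
Proof. by rewrite powR_mulrn ?ltW ?phi_gt0. Qed.

Lemma ltr_phi_powR : {mono powR (phi : R) : x y / x < y}.
Proof. by move=> x y; rewrite !phi_powRE ltr_expR ltr_pM2r ?ln_phi_gt0. Qed.

Lemma ler_phi_powR : {homo powR (phi : R) : x y / x <= y}.
Proof. exact/ler_powR/ltW/phi_gt1. Qed.

Lemma logphi_natX a k : (0 < a)%N -> logphi (a ^ k)%:R = k%:R * logphi a%:R.
Proof.
by move=> a_gt0; rewrite /logphi natrX lnXn ?ltr0n // mulr_natl mulrnAl.
Qed.

Lemma logphi_gt0 (x : R) : 1 < x -> 0 < logphi x.
Proof. by move=> x_gt1; apply: divr_gt0; [apply: ln_gt0 | apply: ln_phi_gt0]. Qed.

Lemma logphi_nat_irrational a : (1 < a)%N -> irrational (logphi a%:R).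
Proof.
move=> a_gt1 /rationalP[p [q laE]].
have a_gt0 : (0 < a)%N by apply: ltn_trans a_gt1.
have la_gt0 : 0 < logphi a%:R by rewrite logphi_gt0 ?ltr1n.
have q_gt0 : (0 < q)%N by case: q laE la_gt0 => // ->; rewrite invr0 mulr0 ltxx.
have qaE : q%:R * logphi a%:R = p%:~R by rewrite laE mulrC divfK // pnatr_eq0 -lt0n.
have aqE : (a ^ q)%:R = phi `^ (p%:~R : R).
  by rewrite -qaE -logphi_natX ?phi_powR_logphi // ltr0n expn_gt0 a_gt0.
have : 1 < phi `^ (p%:~R : R) by rewrite -aqE ltr1n -(expn0 a) ltn_exp2l.
rewrite phi_powR_gt1 ltr0z; case: p {laE qaE} aqE => // p aqE p_gt0.
have := phiX_neq_nat (R := R) (a ^ q) (p_gt0 : (0 < p)%N).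
by rewrite -phi_powR_nat pmulrn -aqE eqxx.
Qed.

Lemma phi_powR_beta : phi `^ beta = Num.sqrt 5 / phi :> R.
Proof.
rewrite phi_powR_logphi ?one_add_phi_invsq //.
by rewrite divr_gt0 ?sqrt5_gt0 ?phi_gt0.
Qed.

Lemma phi_powR_1Bbeta : phi `^ (1 - beta) = phi ^+ 2 / Num.sqrt 5 :> R.
Proof.
rewrite phi_powRD phi_powRN phi_powR_beta -[1]/(1%:R) phi_powR_nat invf_div.
by rewrite mulrA -expr2.
Qed.

Lemma beta_itv : 0 < beta < 1.
Proof.
have B_gt1 : 1 < 1 + phi ^-2 :> R by rewrite ltrDl invr_gt0 exprn_gt0 ?phi_gt0.
have B_lt_phi : 1 + phi ^-2 < phi :> R.
  rewrite one_add_phi_invsq ltr_pdivrMr ?phi_gt0 // -expr2 phi_sq.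
  by have /andP[_ ?] := sqrt5_bounds (R := R); rewrite /phi; lra.
rewrite logphi_gt0 //= ltr_pdivrMr ?ln_phi_gt0 // mul1r.
by rewrite ltr_ln ?posrE ?phi_gt0 ?(lt_trans ltr01).
Qed.

Lemma phiX_gt_inv {c : R} : 0 < c ->
  exists M0 : nat, forall M, (M0 <= M)%N -> 1 < phi ^+ M * c.
Proof.
move=> c_gt0; exists (Num.truncn (logphi c^-1)).+1 => M le_M.
rewrite -ltr_pdivrMr // div1r -phi_powR_nat -[c^-1]phi_powR_logphi ?invr_gt0 //.
by rewrite ltr_phi_powR (lt_le_trans (truncnS_gt _)) ?ler_nat.
Qed.

Lemma phiX_gaps {g : R} {M j} : 1 < g -> (M <= j)%N ->
  1 < phi ^+ M * (1 - g^-1) -> 1 < phi ^+ j * (1 - g^-1) /\ 1 < phi ^+ j * (g - 1).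
Proof.
move=> g_gt1 le_Mj gapM; have g_gt0 : 0 < g := lt_trans ltr01 g_gt1.
have c_ge0 : 0 <= 1 - g^-1 by rewrite subr_ge0 invf_le1 ?ltW.
have gap_j : 1 < phi ^+ j * (1 - g^-1).
  by apply: lt_le_trans gapM _; rewrite ler_wpM2r // ler_eXn2l ?phi_gt1.
split=> //; apply: lt_le_trans gap_j _; rewrite ler_wpM2l ?exprn_ge0 ?ltW ?phi_gt0 //.
have : g * g^-1 = 1 by rewrite mulfV ?gt_eqF.
have : g^-1 <= 1 by rewrite invf_le1 ?ltW.
by nra.
Qed.

Lemma LB101_of_phi_powR (d x : R) (M m : nat) : 0 < d -> (3 <= M)%N ->
  1 < phi ^+ M * (1 - phi `^ (- d)) -> M%:R + d <= x <= M%:R + (1 - beta - d) ->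
  m%:R = phi `^ x -> LB_is 3 m [:: true; false; true].
Proof.
move=> d_gt0 M_ge3 gapM /andP[lo hi] mE; rewrite phi_powRN in gapM.
set g := phi `^ d in gapM; have g_gt1 : 1 < g by rewrite phi_powR_gt1.
have [_ gap_M] := phiX_gaps g_gt1 (leqnn M) gapM.
have [gap_M2 _] := phiX_gaps g_gt1 (leqW (leqnSn M)) gapM.
have m_ge : phi ^+ M * g <= m%:R by rewrite mE -phi_powR_nat -phi_powRD ler_phi_powR.
have m_le : m%:R <= phi ^+ M * (phi ^+ 2 / Num.sqrt 5 * g^-1).
  by rewrite mE -phi_powR_nat -phi_powR_1Bbeta -phi_powRN -!phi_powRD ler_phi_powR.
have sqrt5_m : Num.sqrt 5 * m%:R <= phi ^+ M.+2 * g^-1.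
  have sqrt5_neq0 : Num.sqrt 5 != 0 :> R by rewrite gt_eqF ?sqrt5_gt0.
  have g_neq0 : g != 0 by rewrite gt_eqF ?(lt_trans ltr01).
  have -> : phi ^+ M.+2 * g^-1 =
      Num.sqrt 5 * (phi ^+ M * (phi ^+ 2 / Num.sqrt 5 * g^-1)).
    by rewrite -[M.+2]addn2 exprD; field; rewrite sqrt5_neq0 g_neq0.
  by rewrite (ler_pM2l sqrt5_gt0).
have lucas_le : (lucas M)%:R <= m%:R :> R.
  by apply: le_lucas_of_phiX; move: gap_M; rewrite mulrBr mulr1; lra.
have m_lt : m%:R < (F M.+1)%:R :> R.
  by apply: lt_F_of_phiX; move: gap_M2; rewrite mulrBr mulr1; lra.
rewrite ler_nat in lucas_le; rewrite ltr_nat in m_lt.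
have := @LB3_range M m M_ge3; rewrite -lucas_F ?(leq_trans _ M_ge3) // lucas_le; apply.
by rewrite m_lt (leq_trans _ lucas_le) // lucas_F ?(leq_trans _ M_ge3) ?leq_addr.
Qed.

Lemma LB100_of_phi_powR (d x : R) (M m : nat) : 0 < d -> (3 <= M)%N ->
  1 < phi ^+ M * (1 - phi `^ (- d)) -> M%:R + (1 - beta + d) <= x <= M%:R + (1 - d) ->
  m%:R = phi `^ x -> LB_is 3 m [:: true; false; false].
Proof.
move=> d_gt0 M_ge3 gapM /andP[lo hi] mE; rewrite phi_powRN in gapM.
set g := phi `^ d in gapM; have g_gt1 : 1 < g by rewrite phi_powR_gt1.
have [gap_M1 _] := phiX_gaps g_gt1 (leqnSn M) gapM.
have [_ gap_M2] := phiX_gaps g_gt1 (leqW (leqnSn M)) gapM.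
have m_ge : phi ^+ M * (phi ^+ 2 / Num.sqrt 5 * g) <= m%:R.
  by rewrite mE -phi_powR_nat -phi_powR_1Bbeta -!phi_powRD ler_phi_powR.
have m_le : m%:R <= phi ^+ M * (phi `^ 1 * phi `^ (- d)).
  by rewrite mE -phi_powR_nat -!phi_powRD ler_phi_powR.
rewrite phi_powR1 phi_powRN -/g mulrA -exprSr in m_le.
have sqrt5_m : phi ^+ M.+2 * g <= Num.sqrt 5 * m%:R.
  have sqrt5_neq0 : Num.sqrt 5 != 0 :> R by rewrite gt_eqF ?sqrt5_gt0.
  have -> : phi ^+ M.+2 * g = Num.sqrt 5 * (phi ^+ M * (phi ^+ 2 / Num.sqrt 5 * g)).
    by rewrite -[M.+2]addn2 exprD; field.
  by rewrite (ler_pM2l sqrt5_gt0).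
have F_le : (F M.+1)%:R <= m%:R :> R.
  by apply: le_F_of_phiX; move: gap_M2; rewrite mulrBr mulr1; lra.
have lt_lucas : m%:R < (lucas M.+1)%:R :> R.
  by apply: lt_lucas_of_phiX; move: gap_M1; rewrite mulrBr mulr1; lra.
rewrite ler_nat in F_le.
rewrite ltr_nat lucas_F ?(leq_trans _ (leqW M_ge3)) // in lt_lucas.
have := @LB3_range M.+1 m (leqW M_ge3).
rewrite [(F M.+1 + _ <= m)%N]leqNgt lt_lucas; apply.
rewrite F_le (leq_trans lt_lucas) // F_SS leq_add2l.
by apply: leq_F; lia.
Qed.

Lemma LB3_eventually {a d} : (1 < a)%N -> 0 < d ->
  exists K0 : nat, forall k, (K0 <= k)%N ->
  (mod1_in d (1 - beta - d) (k%:R * logphi a%:R) ->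
     LB_is 3 (a ^ k) [:: true; false; true]) /\
  (mod1_in (1 - beta + d) (1 - d) (k%:R * logphi a%:R) ->
     LB_is 3 (a ^ k) [:: true; false; false]).
Proof.
move=> a_gt1 d_gt0; have a_gt0 : (0 < a)%N := ltnW a_gt1.
have /andP[beta_gt0 beta_lt1] := beta_itv.
have c_gt0 : 0 < 1 - phi `^ (- d).
  by rewrite subr_gt0 phi_powRN invf_lt1 ?phi_powR_gt1 // (lt_trans ltr01) ?phi_powR_gt1.
have [M0 gap] := phiX_gt_inv c_gt0; set M1 := maxn M0 3.
have la_gt0 : 0 < logphi a%:R by rewrite logphi_gt0 ?ltr1n.
exists (Num.truncn ((M1%:R + 1) / logphi a%:R)).+1 => k le_k.
have x_ge : M1%:R + 1 <= k%:R * logphi a%:R.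
  by rewrite -ler_pdivrMr // ltW // (lt_le_trans (truncnS_gt _)) ?ler_nat.
have akE : (a ^ k)%:R = phi `^ (k%:R * logphi a%:R).
  by rewrite -logphi_natX // phi_powR_logphi // ltr0n expn_gt0 a_gt0.
have M_ge M : (M1 <= M)%N -> (3 <= M)%N /\ 1 < phi ^+ M * (1 - phi `^ (- d)).
  by rewrite geq_max => /andP[le_M0 le_3M]; split=> //; apply: gap.
have v101_le1 : 1 - beta - d <= 1 by lra.
have v100_le1 : 1 - d <= 1 by lra.
split=> hit.
  have [M /M_ge[M_ge3 gapM] xM] := mod1_in_nat M1 hit v101_le1 x_ge.
  exact: LB101_of_phi_powR d_gt0 M_ge3 gapM xM akE.
have [M /M_ge[M_ge3 gapM] xM] := mod1_in_nat M1 hit v100_le1 x_ge.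
exact: LB100_of_phi_powR d_gt0 M_ge3 gapM xM akE.
Qed.

End LogPhi.

Local Open Scope classical_set_scope.

Section Densities.
Context {R : realType}.

Lemma cvg_complementary_densities (x y : nat -> R) (l : R) :
  (forall n, x n + y n <= 1) ->
  (forall e, 0 < e -> exists N0 : nat, forall n, (N0 <= n)%N ->
     l - e <= x n /\ 1 - l - e <= y n) ->
  x @ \oo --> l /\ y @ \oo --> 1 - l.
Proof.
move=> sum_le1 lower.
by split; apply/cvgrPdist_le => e e_gt0; have [N0 lowerN] := lower e e_gt0;
  exists N0 => // n /= /lowerN[xn yn]; have := sum_le1 n; rewrite ler_norml; lra.
Qed.

Lemma cntLB_lower_bounds a (e : R) : (1 < a)%N -> 0 < e ->
  exists N0 : nat, forall n, (N0 <= n)%N ->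
    beta - e <= (cntLB a n [:: true; false; false])%:R / n%:R /\
    1 - beta - e <= (cntLB a n [:: true; false; true])%:R / n%:R.
Proof.
move=> a_gt1 e_gt0; have /andP[beta_gt0 beta_lt1] := @beta_itv R.
set d := Num.min e (Num.min beta (1 - beta)) / 4.
have [d_e d_beta d_1beta] : [/\ 4 * d <= e, 4 * d <= beta & 4 * d <= 1 - beta].
  by rewrite /d mulrC divfK // !ge_min !lexx /= ?orbT.
have d_gt0 : 0 < d by rewrite divr_gt0 // !lt_min e_gt0 beta_gt0 subr_gt0.
have e2_gt0 : 0 < e / 2 by rewrite divr_gt0.
have a_irr := @logphi_nat_irrational R a a_gt1.
have [K0 LB_hits] := LB3_eventually a_gt1 d_gt0.
have w100 : 0 <= (1 - d) - (1 - beta + d) <= 1 by apply/andP; split; lra.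
have w101 : 0 <= (1 - beta - d) - d <= 1 by apply/andP; split; lra.
have [N1 dens100] := visits_lower_density
  (P := fun k => `[< LB_is 3 (a ^ k) [:: true; false; false] >]) a_irr w100 e2_gt0
  (fun k le_k hit => asboolT ((LB_hits k le_k).2 hit)).
have [N2 dens101] := visits_lower_density
  (P := fun k => `[< LB_is 3 (a ^ k) [:: true; false; true] >]) a_irr w101 e2_gt0
  (fun k le_k hit => asboolT ((LB_hits k le_k).1 hit)).
exists (maxn N1 N2) => n; rewrite geq_max => /andP[/dens100 le100 /dens101 le101].
by split; rewrite /cntLB; lra.
Qed.

End Densities.

Theorem theorem1p3 (R : realType) (a : nat) (ha : (1 < a)%N) :
  (fun n : nat => (cntLB a n [:: true; false; false])%:R / n%:R : R) @ \oo
     --> ln (1 + (@phi R) ^-2) / ln (@phi R)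
  /\
  (fun n : nat => (cntLB a n [:: true; false; true])%:R / n%:R : R) @ \oo
     --> ln ((@phi R) / (1 + (@phi R) ^-2)) / ln (@phi R).
Proof.
have B_gt0 : 0 < 1 + (@phi R) ^-2 by rewrite addr_gt0 ?invr_gt0 ?exprn_gt0 ?phi_gt0.
have -> : ln (phi / (1 + phi ^-2)) / ln phi = 1 - @beta R.
  rewrite ln_div ?posrE ?phi_gt0 // mulrBl divff ?gt_eqF ?ln_phi_gt0 //.
apply: cvg_complementary_densities => [n|e e_gt0]; last exact: cntLB_lower_bounds.
case: n => [|n]; first by rewrite invr0 !mulr0 addr0 ler01.
rewrite -mulrDl ler_pdivrMr ?ltr0n // mul1r -natrD ler_nat.
exact: cntLB_disjoint.
Qed.
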